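(* Let $Z_0=(X_0,Y_0)$ be a Filippov system for which $p\in\Sigma$ is an invisible cusp-fold singularity of degree $1$, i.e. $p$ is a cusp of $X_0$ and an invisible fold of $Y_0$, $S_{X_0}$ and $S_{Y_0}$ intersect transversally at $p$, and $Y_0X_0f(p)\neq0$. Then there exist a neighborhood $\mathcal{U}$ of $Z_0$ in $\Omega^\infty$ and a neighborhood $U\subset\mathbb{R}^3$ of $p$ such that no $Z\in\mathcal{U}$ has a crossing limit cycle contained in $U$.
   Context: Let $M\subset\mathbb{R}^3$ be open, $f:M\to\mathbb{R}$ smooth with $0$ a regular value, $\Sigma=f^{-1}(0)$, $M^{\pm}=\{\pm f>0\}$. $\Omega^\infty$ is the space of Filippov (piecewise smooth) systems $Z=(X,Y)$ with switching manifold $\Sigma$, where $X,Y$ are $\mathcal{C}^\infty$ vector fields, $X$ acting on $M^+$ and $Y$ on $M^-$, with the usual $\mathcal{C}^\infty$ topology on pairs; trajectories follow Filippov's convention. Lie derivatives: $Xf(p)=\langle X(p),\nabla f(p)\rangle$, $X^kf=X(X^{k-1}f)$, $YXf=Y(Xf)$; $S_X=\{p\in\Sigma:Xf(p)=0\}$. The crossing region is $\Sigma^c=\{p\in\Sigma: Xf(p)Yf(p)>0\}$. A point $p\in\Sigma$ is a fold of $X$ if $Xf(p)=0\neq X^2f(p)$; a cusp of $X$ if $Xf(p)=X^2f(p)=0$, $X^3f(p)\neq0$ and $\det(\nabla f(p),\nabla Xf(p),\nabla X^2f(p))\neq0$. A fold $p$ of $Y$ (acting on $M^-$) is invisible if $Y^2f(p)>0$.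 A crossing limit cycle (CLC) of $Z$ is an isolated closed orbit of $Z$ formed by concatenating regular orbit arcs of $X$ in $M^+$ and of $Y$ in $M^-$, meeting $\Sigma$ only at points of $\Sigma^c$. *)

From mathcomp Require Import all_boot all_order all_algebra.
From mathcomp Require Import all_classical all_reals all_analysis.
Set Implicit Arguments. Unset Strict Implicit. Unset Printing Implicit Defensive.
Import Order.TTheory GRing.Theory Num.Theory.
Import numFieldNormedType.Exports.
Local Open Scope classical_set_scope.
Local Open Scope ring_scope.

Definition ecoord {R : realType} (i : 'I_3) : 'rV[R]_3 := delta_mx 0 i.

Definition pd {R : realType} {W : normedModType R} (i : 'I_3)
  (g : 'rV[R]_3 -> W) : 'rV[R]_3 -> W := fun x => 'D_(ecoord i) g x.

Definition iter_pd {R : realType} {W : normedModType R} (s : seq 'I_3)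
  (g : 'rV[R]_3 -> W) : 'rV[R]_3 -> W := foldr (fun i h => pd i h) g s.

Definition smooth_on {R : realType} {W : normedModType R} (M : set 'rV[R]_3)
  (g : 'rV[R]_3 -> W) : Prop :=
  forall (s : seq 'I_3) (x : 'rV[R]_3), M x ->
    {for x, continuous (iter_pd s g)} /\
    forall i : 'I_3, derivable (iter_pd s g) x (ecoord i).

Definition grad {R : realType} (g : 'rV[R]_3 -> R) (x : 'rV[R]_3) : 'rV[R]_3 :=
  \row_i pd i g x.

Definition lie {R : realType} (X : 'rV[R]_3 -> 'rV[R]_3) (g : 'rV[R]_3 -> R)
  : 'rV[R]_3 -> R := fun x => \sum_(i < 3) X x 0 i * pd i g x.

Definition det3 {R : realType} (a b c : 'rV[R]_3) : R :=
  \det (col_mx a (col_mx b c) : 'M[R]_3).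

Definition regular_zero {R : realType} (M : set 'rV[R]_3) (f : 'rV[R]_3 -> R) : Prop :=
  forall x, M x -> f x = 0 -> grad f x != 0.

Definition Sigma {R : realType} (M : set 'rV[R]_3) (f : 'rV[R]_3 -> R) : set 'rV[R]_3 :=
  [set x | M x /\ f x = 0].
Definition Mplus {R : realType} (M : set 'rV[R]_3) (f : 'rV[R]_3 -> R) : set 'rV[R]_3 :=
  [set x | M x /\ 0 < f x].
Definition Mminus {R : realType} (M : set 'rV[R]_3) (f : 'rV[R]_3 -> R) : set 'rV[R]_3 :=
  [set x | M x /\ f x < 0].

Definition crossing_region {R : realType} (M : set 'rV[R]_3) (f : 'rV[R]_3 -> R)
  (X Y : 'rV[R]_3 -> 'rV[R]_3) : set 'rV[R]_3 :=
  [set x | Sigma M f x /\ 0 < lie X f x * lie Y f x].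

Definition is_cusp {R : realType} (f : 'rV[R]_3 -> R) (X : 'rV[R]_3 -> 'rV[R]_3)
  (p : 'rV[R]_3) : Prop :=
  [/\ lie X f p = 0, lie X (lie X f) p = 0, lie X (lie X (lie X f)) p != 0 &
      det3 (grad f p) (grad (lie X f) p) (grad (lie X (lie X f)) p) != 0].

Definition is_fold {R : realType} (f : 'rV[R]_3 -> R) (Y : 'rV[R]_3 -> 'rV[R]_3)
  (p : 'rV[R]_3) : Prop :=
  lie Y f p = 0 /\ lie Y (lie Y f) p != 0.

(* p is an invisible fold of Y (Y acting on M^-) *)
Definition is_invisible_fold {R : realType} (f : 'rV[R]_3 -> R)
  (Y : 'rV[R]_3 -> 'rV[R]_3) (p : 'rV[R]_3) : Prop :=
  is_fold f Y p /\ 0 < lie Y (lie Y f) p.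

(* S_X = Sigma ∩ {Xf = 0} and S_Y = Sigma ∩ {Yf = 0} meet transversally at p:
   their tangent lines ker(grad f) ∩ ker(grad Xf) and ker(grad f) ∩ ker(grad Yf)
   span T_p Sigma, i.e. grad f, grad Xf, grad Yf are linearly independent. *)
Definition SX_SY_transversal {R : realType} (f : 'rV[R]_3 -> R)
  (X Y : 'rV[R]_3 -> 'rV[R]_3) (p : 'rV[R]_3) : Prop :=
  det3 (grad f p) (grad (lie X f) p) (grad (lie Y f) p) != 0.

Definition crossing_periodic_orbit {R : realType} (M : set 'rV[R]_3)
  (f : 'rV[R]_3 -> R) (X Y : 'rV[R]_3 -> 'rV[R]_3) (g : R -> 'rV[R]_3) (T : R)
  : Prop :=
  [/\ 0 < T, continuous g, (forall t, g (t + T) = g t) &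
   exists (n : nat) (tt : nat -> R),
     [/\ [/\ (0 < n)%N, tt 0%N = 0 & tt n = T],
         (forall k, (k < n)%N -> tt k < tt k.+1),
         (forall k, (k <= n)%N -> crossing_region M f X Y (g (tt k))) &
         (forall k, (k < n)%N ->
            (forall t, tt k < t < tt k.+1 ->
               Mplus M f (g t) /\ is_derive t (1 : R) g (X (g t))) \/
            (forall t, tt k < t < tt k.+1 ->
               Mminus M f (g t) /\ is_derive t (1 : R) g (Y (g t))))]].

Definition crossing_limit_cycle {R : realType} (M : set 'rV[R]_3)
  (f : 'rV[R]_3 -> R) (X Y : 'rV[R]_3 -> 'rV[R]_3) (g : R -> 'rV[R]_3) (T : R)
  : Prop :=
  crossing_periodic_orbit M f X Y g T /\
  exists V : set 'rV[R]_3, [/\ open V, range g `<=` V &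
    forall (g' : R -> 'rV[R]_3) (T' : R),
      crossing_periodic_orbit M f X Y g' T' -> range g' `<=` V -> range g' = range g].

(* basic neighbourhood of the weak (compact-open) C^oo topology:
   all partial derivatives of order <= k are eps-close on the compact K *)
Definition Cinf_close {R : realType} (K : set 'rV[R]_3) (k : nat) (eps : R)
  (X X0 : 'rV[R]_3 -> 'rV[R]_3) : Prop :=
  forall (s : seq 'I_3) (x : 'rV[R]_3), (size s <= k)%N -> K x ->
    `|iter_pd s X x - iter_pd s X0 x| < eps.

From mathcomp Require Import all_boot all_order all_algebra.
From mathcomp Require Import all_classical all_reals all_analysis.
From mathcomp Require Import lra.
Import Order.TTheory GRing.Theory Num.Theory.
Import numFieldNormedType.Exports.
Local Open Scope classical_set_scope.
Local Open Scope ring_scope.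

(* At the cusp p, X0^2 f(p) = 0 says that X0(p) is orthogonal to grad (X0 f)(p),
   while Y0 X0 f(p) <> 0 says that Y0(p) is not, and X0^3 f(p) <> 0 gives
   X0(p) <> 0.  Hence X0(p) and Y0(p) are linearly independent and some w has
   <X0(p), w> = <Y0(p), w> = 1.  On a small closed ball around p, every (X, Y)
   C^0-close to (X0, Y0) still has <X, w> > 0 and <Y, w> > 0, so t |-> <g(t), w>
   strictly increases along every arc of a crossing orbit g inside the ball, and
   g cannot close up. *)

Section RowDot.
Context {R : realType} {n : nat}.
Implicit Types (a b u v w : 'rV[R]_n) (c : R).

Definition dot a b : R := \sum_(i < n) a 0 i * b 0 i.

Lemma dotBl a b w : dot (a - b) w = dot a w - dot b w.
Proof. by rewrite /dot -sumrB; apply: eq_bigr => i _; rewrite !mxE mulrBl. Qed.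

Lemma dotDr a u v : dot a (u + v) = dot a u + dot a v.
Proof. by rewrite /dot -big_split; apply: eq_bigr => i _; rewrite !mxE mulrDr. Qed.

Lemma dotZr a c u : dot a (c *: u) = c * dot a u.
Proof. by rewrite /dot mulr_sumr; apply: eq_bigr => i _; rewrite !mxE mulrCA. Qed.

Lemma continuous_dotl w : continuous (dot ^~ w).
Proof.
move=> y; apply: differentiable_continuous.
rewrite (_ : dot ^~ w = \sum_(i < n) (fun y : 'rV[R]_n => y 0 i * w 0 i)).
  apply: differentiable_sum => i; apply: differentiableM.
    exact: differentiable_coord.
  exact: differentiable_cst.
by apply/funext => z; rewrite fct_sumE.
Qed.

Lemma dotl_gt0_robust w c : 0 < c ->
  exists2 e, 0 < e & forall a b, `|a - b| < e -> c < dot b w -> 0 < dot a w.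
Proof.
move=> c0.
have [e e0 small] : nbhs_ball (0 : 'rV[R]_n) (fun y => `|dot y w| < c).
  apply/nbhs_ballP; have := continuous_dotl w 0.
  move=> /(@cvgr_dist_lt _ _ _ _ _ (dot ^~ w)) /(_ c c0).
  rewrite (_ : dot 0 w = 0); last by rewrite /dot big1 // => i _; rewrite mxE mul0r.
  by apply: filterS => y; rewrite sub0r normrN.
exists e => // a b ab bw.
have := small (a - b); rewrite -ball_normE /ball_ /= sub0r normrN => /(_ ab).
by rewrite dotBl ltr_norml => /andP[abw _]; lra.
Qed.

Lemma near_dotl_gt {T : topologicalType} (Z : T -> 'rV[R]_n) p w c :
  {for p, continuous Z} -> c < dot (Z p) w -> \forall x \near p, c < dot (Z x) w.
Proof.
by move=> cZ; move: (continuous_comp cZ (continuous_dotl w (Z p))) => /cvgr_gt; apply.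
Qed.

Lemma common_unit_direction {a b u v} :
  dot a u = 0 -> dot a v != 0 -> dot b u != 0 ->
  exists w, dot a w = 1 /\ dot b w = 1.
Proof.
move=> au0 av0 bu0.
exists ((dot a v)^-1 *: v + ((1 - dot b v / dot a v) / dot b u) *: u).
by rewrite !dotDr !dotZr au0 mulr0 addr0 mulVf // divfK // mulrC addrC subrK.
Qed.

End RowDot.

Lemma is_derive_coord {R : realFieldType} {V : normedModType R} {m n : nat}
  (M : V -> 'M[R]_(m, n)) (t v : V) (D : 'M[R]_(m, n)) i j :
  is_derive t v M D -> is_derive t v (fun x => M x i j) (D i j).
Proof.
move=> dM; have derM : derivable M t v by case: dM.
apply: DeriveDef; first exact: (derivable_mxP _ _ _).1 derM i j.
by rewrite -(@derive_val _ _ _ _ _ _ _ dM) derive_mx // mxE.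
Qed.

Lemma is_derive_dotl {R : realType} {n : nat} (g : R -> 'rV[R]_n) (t : R)
  (D w : 'rV[R]_n) :
  is_derive t 1 g D -> is_derive t 1 (fun s => dot (g s) w) (dot D w).
Proof.
move=> dg.
rewrite (_ : (fun s => _) = \sum_(i < n) (w 0 i \*: (fun s => g s 0 i))).
  apply: is_derive_eq.
    by apply: is_derive_sum => i; apply/is_deriveZ/is_derive_coord.
  by apply: eq_bigr => i _; rewrite /= mulrC.
by apply/funext => s; rewrite fct_sumE; apply: eq_bigr => i _; rewrite /= mulrC.
Qed.

Lemma is_derive_gt0_lt {R : realType} (phi : R -> R) (a b : R) :
  a < b -> continuous phi ->
  (forall t, a < t < b -> exists2 d, 0 < d & is_derive t 1 phi d) ->
  phi a < phi b.
Proof.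
move=> ab phic dphi.
have inab (t : R) : t \in `]a, b[ -> exists2 d, 0 < d & is_derive t 1 phi d.
  by rewrite in_itv /= => /dphi.
apply: (@gtr0_derive1_lt_cc _ _ a b) => //.
- by move=> t /inab[d _ dt]; case: dt.
- by move=> t /inab[d d0 dt]; rewrite derive1E (@derive_val _ _ _ _ _ _ _ dt).
- exact: continuous_subspaceT.
- by rewrite in_itv /= lexx ltW.
- by rewrite in_itv /= lexx ltW.
Qed.

Lemma closed_ball_rV_compact {R : realType} {n : nat} (p : 'rV[R]_n) (r : R) :
  0 < r -> compact (closed_ball p r).
Proof.
move=> r0; apply: bounded_closed_compact; last exact: closed_ball_closed.
have rr : r < r + r by rewrite ltrDl.
have sub := closed_ball_subset r0 rr.
rewrite /= /bounded_near; near=> N => x /sub; rewrite -ball_normE /= => px.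
rewrite -[x](subKr p) (le_trans (ler_normB _ _)) //.
apply: (@le_trans _ _ (`|p| + (r + r))); first by rewrite lerD2l ltW.
by near: N; apply: nbhs_pinfty_ge; rewrite num_real.
Unshelve. all: by end_near.
Qed.

Section CrossingOrbits.
Context {R : realType}.
Implicit Types (M U : set 'rV[R]_3) (f : 'rV[R]_3 -> R) (X Y : 'rV[R]_3 -> 'rV[R]_3).

Lemma lie_dotE X f x : lie X f x = dot (X x) (grad f x).
Proof. by apply: eq_bigr => i _; rewrite mxE. Qed.

Lemma Cinf_close_C0 {K k eps X X0 x} :
  Cinf_close K k eps X X0 -> K x -> `|X x - X0 x| < eps.
Proof. by move=> close Kx; apply: (close [::]). Qed.

Lemma no_crossing_periodic_orbit_in {M f X Y U} w {g T} :
  (forall x, U x -> 0 < dot (X x) w) -> (forall x, U x -> 0 < dot (Y x) w) ->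
  crossing_periodic_orbit M f X Y g T -> ~ range g `<=` U.
Proof.
move=> Xw Yw [_ gc gper [n [tt [[n0 tt0 ttn] tt_lt _ arcs]]]] gU.
pose phi s := dot (g s) w.
have phi_arc k : (k < n)%N -> phi (tt k) < phi (tt k.+1).
  move=> kn; apply: is_derive_gt0_lt (tt_lt k kn) _ _.
    by move=> s; apply: continuous_comp (gc s) (continuous_dotl w (g s)).
  move=> t tk; have gUt : U (g t) by apply: gU; exists t.
  case: (arcs k kn) => /(_ t tk) [_ dg].
    by exists (dot (X (g t)) w); [exact: Xw | exact: is_derive_dotl].
  by exists (dot (Y (g t)) w); [exact: Yw | exact: is_derive_dotl].
have : phi (tt 0%N) < phi (tt n).
  apply: (@Order.NatMonotonyTheory.homo_ltn_lt_in _ _ [pred i | i <= n]%N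
           (phi \o tt)) => //=.
  - by move=> i j _ jn k /andP[_ /ltnW /leq_trans]; apply.
  - by move=> i _; apply: phi_arc.
  - by rewrite inE.
by rewrite /phi tt0 ttn -[T]add0r gper ltxx.
Qed.

End CrossingOrbits.

Theorem theorem3p2 (R : realType) (M : set 'rV[R]_3) (f : 'rV[R]_3 -> R)
  (X0 Y0 : 'rV[R]_3 -> 'rV[R]_3) (p : 'rV[R]_3) :
  open M -> smooth_on M f -> regular_zero M f ->
  smooth_on M X0 -> smooth_on M Y0 ->
  Sigma M f p ->
  is_cusp f X0 p -> is_invisible_fold f Y0 p -> SX_SY_transversal f X0 Y0 p ->
  lie Y0 (lie X0 f) p != 0 ->
  exists (K : set 'rV[R]_3) (k : nat) (eps : R),
    [/\ compact K, K `<=` M, 0 < eps &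
    exists U : set 'rV[R]_3, nbhs p U /\
      forall X Y : 'rV[R]_3 -> 'rV[R]_3,
        smooth_on M X -> smooth_on M Y ->
        Cinf_close K k eps X X0 -> Cinf_close K k eps Y Y0 ->
        forall (g : R -> 'rV[R]_3) (T : R),
          ~ (crossing_limit_cycle M f X Y g T /\ range g `<=` U)].
Proof.
move=> oM _ _ sX0 sY0 [Mp _] [_ X2f0 X3f0 _] _ _ YXf0.
rewrite !lie_dotE in X2f0 X3f0 YXf0.
have [w [X0w Y0w]] := common_unit_direction X2f0 X3f0 YXf0.
have [e e0 robust] := @dotl_gt0_robust R 3 w 2^-1 ltac:(by []).
have [[cX0 _] [cY0 _]] := (sX0 [::] p Mp, sY0 [::] p Mp).
have half_lt1 : 2^-1 < 1 :> R by rewrite invf_lt1 // ltr1n.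
have /nbhs_closedballP[r ball_r] :
    \forall x \near p, [/\ M x, 2^-1 < dot (X0 x) w & 2^-1 < dot (Y0 x) w].
  near=> x; split; near: x; first exact: oM.
  - by apply: near_dotl_gt cX0 _; rewrite X0w.
  - by apply: near_dotl_gt cY0 _; rewrite Y0w.
exists (closed_ball p r%:num), 0%N, e; split => //.
- exact: closed_ball_rV_compact.
- by move=> x /ball_r[].
exists (ball p r%:num); split; first exact: nbhsx_ballx.
move=> X Y _ _ cX cY g T [[orbit _] gU].
apply: (no_crossing_periodic_orbit_in w _ _ orbit gU) => x /subset_closed_ball Kx;
  have [_ X0x Y0x] := ball_r x Kx.
- exact: robust _ _ (Cinf_close_C0 cX Kx) X0x.
- exact: robust _ _ (Cinf_close_C0 cY Kx) Y0x.
Unshelve. all: by end_near.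
Qed.
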